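(* Let $k\ge1$, $\tau\in Y_k$, $\sigma_1,\dots,\sigma_k\in Y$, and $n=\sum_{i=1}^k(|\sigma_i|+1)$. Then for every $f\in I\cdot\mathrm{Mult}[[B]]$ and all $x_1,\dots,x_n\in B$, $$f_{\tau\circ(\sigma_1\vee|,\dots,\sigma_k\vee|)}(x_1,\dots,x_n)=f_\tau\Big(f_{\sigma_1}(x_1,\dots,x_{m_1-1})x_{m_1},\ f_{\sigma_2}(x_{m_1+1},\dots,x_{m_2-1})x_{m_2},\ \dots,\ f_{\sigma_k}(x_{m_{k-1}+1},\dots,x_{m_k-1})x_{m_k}\Big),$$ where $m_i=\sum_{l\le i}(|\sigma_l|+1)$.
   Context: $B$ is a unital algebra over a field $\mathbb K$ of characteristic zero. $\mathrm{Mult}[[B]]$: sequences $f=(f_n)_{n\ge0}$ of multilinear maps $f_n:B^n\to B$; $I\cdot\mathrm{Mult}[[B]]$ consists of those $f$ of the form $f_0=0$, $f_n(x_1,\dots,x_n)=x_1F_{n-1}(x_2,\dots,x_n)$ for some $F\in\mathrm{Mult}[[B]]$. Planar binary trees: $Y_0=\{|\}$, $Y_n=\{\sigma\vee\tau:\sigma\in Y_k,\tau\in Y_l,k+l=n-1\}$, where $\sigma\vee\tau$ has a root with left subtree $\sigma$ and right subtree $\tau$; $|\tau|$ is the number of internal vertices, ordered left-to-right recursively (vertices of $\sigma$, then the root, then vertices of $\tau$). Each $\tau\in Y_n$, $n\ge1$, is uniquely $\tau_1\vee(\tau_2\vee(\cdots\vee(\tau_k\vee|)))$; $j_i=|\tau_1|+\dots+|\tau_i|+i$.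 For $f\in\mathrm{Mult}[[B]]$: $f_|=1$ and $f_\tau(x_1,\dots,x_n)=f_k(f_{\tau_1}(x_1,\dots,x_{j_1-1})x_{j_1},\dots,f_{\tau_k}(x_{j_{k-1}+1},\dots,x_{j_k-1})x_{j_k})$. Grafting: for trees $X,\sigma$, $X/\sigma$ is $\sigma$ with its leftmost leaf replaced by $X$, and $\sigma\backslash X$ is $\sigma$ with its rightmost leaf replaced by $X$ (so $X/|=X=|\backslash X$). Substitution: for $\tau\in Y_m$ and trees $\rho_1,\dots,\rho_m$, define $\tau\circ(\rho_1,\dots,\rho_m)$ by $|\circ()=|$ and, for $\tau=\alpha\vee\beta$ with $|\alpha|=p$, $\tau\circ(\rho_1,\dots,\rho_m)=\big((\alpha\circ(\rho_1,\dots,\rho_p))/\rho_{p+1}\big)\backslash(\beta\circ(\rho_{p+2},\dots,\rho_m))$ (the $i$-th vertex of $\tau$ in left-to-right order is replaced by $\rho_i$). *)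

From HB Require Import structures.
From mathcomp Require Import all_boot all_order all_algebra.
Set Implicit Arguments. Unset Strict Implicit. Unset Printing Implicit Defensive.
Import GRing.Theory.
Local Open Scope ring_scope.

(* Planar binary trees: Leaf = |, Node l r = l \vee r. *)
Inductive tree : Type := Leaf | Node of tree & tree.

Fixpoint vsize (t : tree) : nat :=
  match t with Leaf => 0%N | Node l r => (vsize l + vsize r).+1 end.

(* right spine decomposition tau = tau_1 v (tau_2 v (... v (tau_k v |))) *)
Fixpoint spine (t : tree) : seq tree :=
  match t with Leaf => [::] | Node l r => l :: spine r end.

(* X / sigma : sigma with its leftmost leaf replaced by X *)
Fixpoint graftL (X s : tree) : tree :=
  match s with Leaf => X | Node l r => Node (graftL X l) r end.

(* sigma \ X : sigma with its rightmost leaf replaced by X *)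
Fixpoint graftR (s X : tree) : tree :=
  match s with Leaf => X | Node l r => Node l (graftR r X) end.

(* substitution tau o (rho_1, ..., rho_m) *)
Fixpoint tsubst (t : tree) (rs : seq tree) : tree :=
  match t with
  | Leaf => Leaf
  | Node a b =>
      graftR (graftL (tsubst a (take (vsize a) rs)) (nth Leaf rs (vsize a)))
             (tsubst b (drop (vsize a).+1 rs))
  end.

Section Mult.
Variables (K : fieldType) (B : algType K).

(* An element of Mult[[B]] is a sequence f = (f_n)_n; f n is meant to be
   applied to lists of length n. *)
Definition multilinear (f : nat -> seq B -> B) : Prop :=
  forall (n : nat) (xs ys : seq B) (a : K) (x y : B),
    (size xs + size ys).+1 = n ->
    f n (xs ++ (a *: x + y) :: ys) = a *: f n (xs ++ x :: ys) + f n (xs ++ y :: ys).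

Definition in_IMult (f : nat -> seq B -> B) : Prop :=
  exists F : nat -> seq B -> B,
    multilinear F /\ f 0%N [::] = 0 /\
    forall (n : nat) (x : B) (xs : seq B), size xs = n -> f n.+1 (x :: xs) = x * F n xs.

(* f_tau (x_1, ..., x_n); targs t xs is the list of arguments
   f_{tau_1}(x_1..x_{j_1-1}) x_{j_1}, ..., fed to f_k. *)
Fixpoint ftree (f : nat -> seq B -> B) (t : tree) (xs : seq B) {struct t} : B :=
  match t with
  | Leaf => 1
  | Node l r =>
      f (size (spine t))
        (ftree f l (take (vsize l) xs) * nth 0 xs (vsize l)
           :: targs f r (drop (vsize l).+1 xs))
  end
with targs (f : nat -> seq B -> B) (t : tree) (xs : seq B) {struct t} : seq B :=
  match t with
  | Leaf => [::]
  | Node l r =>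
      ftree f l (take (vsize l) xs) * nth 0 xs (vsize l)
        :: targs f r (drop (vsize l).+1 xs)
  end.

End Mult.

From HB Require Import structures.
From mathcomp Require Import all_boot all_order all_algebra.
From mathcomp Require Import zify.
Set Implicit Arguments. Unset Strict Implicit. Unset Printing Implicit Defensive.
Import GRing.Theory.
Local Open Scope ring_scope.

(* Since f lies in I.Mult[[B]], f_(l v r)(x) is the first argument f_l(..) x_j
   times a factor that depends only on the later arguments, so grafting X onto
   the leftmost leaf of s multiplies f_s by f_X. Substituting the trees s_i v |
   into tau keeps the right spine of tau and grafts its left subtrees tau_i onto
   the s_i; the i-th argument of the outer f thus becomes
   f_{tau_i}(..) * f_{s_i}(..) x_{m_i}, which is what f_tau computes when fed
   the arguments f_{s_i}(..) x_{m_i}. *)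

Lemma vsize_graftL X s : vsize (graftL X s) = (vsize X + vsize s)%N.
Proof. by elim: s => [|l IHl r _] /=; rewrite ?addn0 // IHl addnS addnA. Qed.

Lemma vsize_graftR s X : vsize (graftR s X) = (vsize s + vsize X)%N.
Proof. by elim: s => [|l _ r IHr] //=; rewrite IHr addnA. Qed.

Lemma vsize_tsubst t rs : size rs = vsize t ->
  vsize (tsubst t rs) = sumn [seq vsize r | r <- rs].
Proof.
elim: t rs => [|a IHa b IHb] rs /=; first by case: rs.
move=> hrs; have ha : (vsize a < size rs)%N by rewrite hrs; lia.
rewrite vsize_graftR vsize_graftL IHa ?IHb; last 2 first.
- by rewrite size_drop hrs; lia.
- by rewrite size_takel // ltnW.
by rewrite -[in RHS](cat_take_drop (vsize a) rs) (drop_nth Leaf ha) map_cat sumn_cat /= addnA.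
Qed.

Lemma tsubst_Node_single a b ss : (vsize a < size ss)%N ->
  tsubst (Node a b) [seq Node s Leaf | s <- ss] =
  Node (graftL (tsubst a [seq Node s Leaf | s <- take (vsize a) ss])
               (nth Leaf ss (vsize a)))
       (tsubst b [seq Node s Leaf | s <- drop (vsize a).+1 ss]).
Proof. by move=> ha; rewrite /= -map_take -map_drop (nth_map Leaf). Qed.

Lemma size_spine_tsubst t ss : size ss = vsize t ->
  size (spine (tsubst t [seq Node s Leaf | s <- ss])) = size (spine t).
Proof.
elim: t ss => [|a _ b IHb] ss hss //.
have ha : (vsize a < size ss)%N by rewrite hss /=; lia.
by rewrite tsubst_Node_single //= IHb // size_drop hss /=; lia.
Qed.

Definition blocks_size (ss : seq tree) : nat := sumn [seq (vsize s).+1 | s <- ss].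

Lemma vsize_tsubst_single t ss : size ss = vsize t ->
  vsize (tsubst t [seq Node s Leaf | s <- ss]) = blocks_size ss.
Proof.
move=> hss; rewrite vsize_tsubst ?size_map // -map_comp.
by under eq_map do rewrite /= addn0.
Qed.

Section Ftree.
Variables (K : fieldType) (B : algType K) (f : nat -> seq B -> B).

Lemma size_targs t xs : size (targs f t xs) = size (spine t).
Proof. by elim: t xs => //= l _ r IH xs; rewrite IH. Qed.

Lemma targs_take t xs : targs f t (take (vsize t) xs) = targs f t xs.
Proof.
elim: t xs => [|l _ r IHr] xs //=.
rewrite take_takel ?nth_take; try lia.
by rewrite -addSn addnC -take_drop IHr.
Qed.

Lemma ftree_take t xs : ftree f t (take (vsize t) xs) = ftree f t xs.
Proof. by case: t => [|l r] //; exact: (congr1 (f _) (targs_take (Node l r) xs)). Qed.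

Lemma ftree_targs_eq t t' xs xs' : size (spine t) = size (spine t') ->
  targs f t xs = targs f t' xs' -> ftree f t xs = ftree f t' xs'.
Proof. by case: t => [|l r]; case: t' => [|l' r'] //= [->] ->. Qed.

Lemma targs_Node_cat a b ys y zs : size ys = vsize a ->
  targs f (Node a b) (ys ++ y :: zs) = ftree f a ys * y :: targs f b zs.
Proof.
move=> hys; rewrite /= -hys take_size_cat // nth_cat ltnn subnn.
by rewrite -cat_rcons drop_size_cat // size_rcons.
Qed.

Fixpoint block_args (ss : seq tree) (xs : seq B) : seq B :=
  if ss is s :: ss' then
    ftree f s (take (vsize s) xs) * nth 0 xs (vsize s)
      :: block_args ss' (drop (vsize s).+1 xs)
  else [::].

Lemma size_block_args ss xs : size (block_args ss xs) = size ss.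
Proof. by elim: ss xs => //= s ss IH xs; rewrite IH. Qed.

Lemma block_args_cat ss ss' xs :
  block_args (ss ++ ss') xs = block_args ss xs ++ block_args ss' (drop (blocks_size ss) xs).
Proof.
elim: ss xs => [|s ss IH] xs /=; first by rewrite drop0.
by rewrite IH drop_drop addnC.
Qed.

Lemma block_args_nth ss xs :
  [seq ftree f (nth Leaf ss i)
         (take (vsize (nth Leaf ss i)) (drop (blocks_size (take i ss)) xs))
       * nth 0 xs (blocks_size (take i ss) + vsize (nth Leaf ss i))
  | i <- iota 0 (size ss)] = block_args ss xs.
Proof.
elim: ss xs => [|s ss IH] xs //=.
rewrite drop0 -[1%N]addn0 iotaDl -map_comp -IH; congr (_ :: _).
apply: eq_map => i /=.
by rewrite /blocks_size /= drop_drop nth_drop addnA [(_ + _.+1)%N]addnC.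
Qed.

Variable F : nat -> seq B -> B.
Hypothesis hF : forall n x xs, size xs = n -> f n.+1 (x :: xs) = x * F n xs.

Lemma ftree_graftL X s xs :
  ftree f (graftL X s) xs = ftree f X xs * ftree f s (drop (vsize X) xs).
Proof.
elim: s xs => [|l IHl r _] xs /=; first by rewrite mulr1.
rewrite !hF ?size_targs // !ftree_take IHl vsize_graftL nth_drop drop_drop.
by rewrite !mulrA addSn addnC.
Qed.

Lemma targs_tsubst t ss xs : size ss = vsize t ->
  targs f (tsubst t [seq Node s Leaf | s <- ss]) xs = targs f t (block_args ss xs).
Proof.
elim: t ss xs => [|a IHa b IHb] ss xs hss; first by case: ss hss.
have ha : (vsize a < size ss)%N by rewrite hss /=; lia.
set sa := take (vsize a) ss; set sg := nth Leaf ss (vsize a).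
set sb := drop (vsize a).+1 ss; set m := blocks_size sa.
have hsa : size sa = vsize a by rewrite size_takel // ltnW.
have hsb : size sb = vsize b by rewrite size_drop hss /=; lia.
have -> : block_args ss xs = block_args sa xs ++
    ftree f sg (drop m xs) * nth 0 xs (m + vsize sg)
      :: block_args sb (drop (m + vsize sg).+1 xs).
  rewrite -(cat_take_drop (vsize a) ss) (drop_nth Leaf ha) block_args_cat /=.
  by rewrite ftree_take nth_drop drop_drop addnC addSn.
rewrite targs_Node_cat ?size_block_args // tsubst_Node_single //= -/sa -/sg -/sb.
rewrite ftree_take ftree_graftL vsize_graftL !vsize_tsubst_single // -/m IHb //.
by rewrite (ftree_targs_eq (size_spine_tsubst hsa) (IHa _ xs hsa)) mulrA.
Qed.

End Ftree.

Theorem lemma3 (K : fieldType) (B : algType K)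
    (charK0 : [pchar K] =i pred0)
    (k : nat) (tau : tree) (sigmas : seq tree)
    (hk : (1 <= k)%N) (htau : vsize tau = k) (hsig : size sigmas = k)
    (f : nat -> seq B -> B) (hf : in_IMult f)
    (xs : seq B)
    (hxs : size xs = sumn [seq (vsize s).+1 | s <- sigmas]) :
  let m := fun i : nat => sumn [seq (vsize s).+1 | s <- take i sigmas] in
  ftree f (tsubst tau [seq Node s Leaf | s <- sigmas]) xs =
  ftree f tau
    [seq ftree f (nth Leaf sigmas i)
           (take (vsize (nth Leaf sigmas i)) (drop (m i) xs))
         * nth 0 xs (m i + vsize (nth Leaf sigmas i))
    | i <- iota 0 k].
Proof.
move=> m; have [F [_ [_ hF]]] := hf.
have hsize : size sigmas = vsize tau by rewrite hsig htau.
rewrite -hsig (block_args_nth f sigmas xs).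
exact: ftree_targs_eq (size_spine_tsubst hsize) (targs_tsubst hF xs hsize).
Qed.
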